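(* Let $\mathbf{E},\mathbf{F}$ be finite-dimensional Euclidean spaces, $\mathcal{K}\subset\mathbf{E}$ a proper cone, $\mathcal{A}:\mathbf{E}\to\mathbf{F}$ linear, $b\in\mathbf{F}$, $c\in\mathbf{E}$, and consider the conic program $\min\{\langle c,x\rangle : \mathcal{A}x=b,\ x\in\mathcal{K}\}$ with solution set $\mathcal{X}_\star$ and its dual $\max\{\langle b,y\rangle : c-\mathcal{A}^*y\in\mathcal{K}^*\}$. Suppose strong duality holds and dual strict complementarity holds for a primal–dual solution pair $(x_\star,y_\star)$ with slack $s_\star=c-\mathcal{A}^*y_\star$. Then there are constants $\gamma,\gamma'\ge0$ (which may be taken as $\gamma'=0$, $\gamma=1/\sigma_{\min}(\mathcal{A}_{\mathcal{V}_{s_\star}})$ when $\mathcal{X}_\star$ is a singleton) such that for all $x\in\mathbf{E}$, $$\begin{aligned}\mathrm{dist}(x,\mathcal{X}_\star)\le{}& (1+\gamma\sigma_{\max}(\mathcal{A}))\|P_{\mathcal{V}_{s_\star}^\perp}(x_+)\|_2+\gamma\|\mathcal{A}(x)-b\|_2\\&+(1+\gamma\sigma_{\max}(\mathcal{A}))\|P_{\mathcal{V}_{s_\star}^\perp}(x_-)\|_2+\gamma'\|P_{\mathcal{V}_{s_\star}}(x_-)\|_2+\gamma'\,\mathrm{dist}(P_{\mathcal{V}_{s_\star}}(x_+),\mathcal{F}_{s_\star}),\end{aligned}$$ where $x_+=P_{\mathcal{K}}(x)$ and $x_-=x-x_+$. (The terms $\|P_{\mathcal{V}_{s_\star}}(x_-)\|_2$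 and $\|P_{\mathcal{V}_{s_\star}^\perp}(x_-)\|_2$ are each bounded by $\|x_-\|_2$.)
   Context: $\mathcal{K}^*$ is the dual cone. Strong duality: the primal and dual solution sets are nonempty, $\mathcal{X}_\star$ is compact, and some solution pair $(x_\star,y_\star)$ satisfies $\langle s_\star,x_\star\rangle=0$ with $s_\star=c-\mathcal{A}^*y_\star$. Complementary face $\mathcal{F}_{s_\star}=\{x\in\mathcal{K}:\langle x,s_\star\rangle=0\}$; complementary space $\mathcal{V}_{s_\star}=\mathrm{aff}(\mathcal{F}_{s_\star})$, a linear subspace, with orthogonal complement $\mathcal{V}_{s_\star}^\perp$. Dual strict complementarity for $(x_\star,y_\star)$ means $x_\star\in\mathrm{relint}(\mathcal{F}_{s_\star})$. $P_C$ denotes the Euclidean projection onto a closed convex set $C$. $\sigma_{\max}(\mathcal{A})=\max_{\|x\|_2=1}\|\mathcal{A}x\|_2$; $\mathcal{A}_{\mathcal{V}_{s_\star}}$ is the restriction of $\mathcal{A}$ to $\mathcal{V}_{s_\star}$ and $\sigma_{\min}(\mathcal{A}_{\mathcal{V}_{s_\star}})=\min_{x\in\mathcal{V}_{s_\star},\|x\|_2=1}\|\mathcal{A}x\|_2$. $\mathrm{dist}(x,C)=\inf_{z\in C}\|x-z\|_2$. *)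

From HB Require Import structures.
From mathcomp Require Import all_boot all_order all_algebra.
From mathcomp Require Import boolp classical_sets reals.
Set Implicit Arguments. Unset Strict Implicit. Unset Printing Implicit Defensive.
Import Order.TTheory GRing.Theory Num.Theory.
Local Open Scope ring_scope.
Local Open Scope classical_set_scope.

(* The Euclidean space E = R^n is modelled by column vectors 'cV[R]_n with   *)
(* the standard inner product; F = R^m likewise; A : E -> F is a matrix, its *)
(* adjoint A^* is the transpose.                                             *)
Section Defs.
Variable R : realType.

Definition ip (n : nat) (u v : 'cV[R]_n) : R := \sum_(i < n) u i 0 * v i 0.
Definition enorm (n : nat) (u : 'cV[R]_n) : R := Num.sqrt (ip u u).

Definition eclosed (n : nat) (C : set 'cV[R]_n) : Prop :=
  forall x, (forall e : R, 0 < e -> exists z, C z /\ enorm (x - z) < e) -> C x.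

Definition ebounded (n : nat) (C : set 'cV[R]_n) : Prop :=
  exists M : R, forall x, C x -> enorm x <= M.

(* compact = closed and bounded (Heine-Borel, finite dimension) *)
Definition ecompact (n : nat) (C : set 'cV[R]_n) : Prop := eclosed C /\ ebounded C.

Definition proper_cone (n : nat) (K : set 'cV[R]_n) : Prop :=
  [/\ K 0,
      (forall x y, K x -> K y -> K (x + y)),
      (forall (t : R) x, 0 <= t -> K x -> K (t *: x)) &
      eclosed K] /\ [/\ 
      (forall x, K x -> K (- x) -> x = 0) &
      (exists x0, exists2 e : R, 0 < e & forall z, enorm (z - x0) < e -> K z)].

Definition dual_cone (n : nat) (K : set 'cV[R]_n) : set 'cV[R]_n :=
  [set s | forall x, K x -> 0 <= ip s x].

Definition proj (n : nat) (C : set 'cV[R]_n) (x : 'cV[R]_n) : 'cV[R]_n :=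
  xget x [set z | C z /\ forall w, C w -> enorm (x - z) <= enorm (x - w)].

Definition dist (n : nat) (x : 'cV[R]_n) (C : set 'cV[R]_n) : R :=
  inf [set enorm (x - z) | z in C].

Definition sigma_max (m n : nat) (A : 'M[R]_(m, n)) : R :=
  sup [set enorm (A *m x) | x in [set x : 'cV[R]_n | enorm x = 1]].

Definition sigma_min_on (m n : nat) (A : 'M[R]_(m, n)) (V : set 'cV[R]_n) : R :=
  inf [set enorm (A *m x) | x in [set x : 'cV[R]_n | V x /\ enorm x = 1]].

Definition aff (n : nat) (C : set 'cV[R]_n) : set 'cV[R]_n :=
  [set x | exists (k : nat) (p : 'I_k -> 'cV[R]_n) (w : 'I_k -> R),
      [/\ forall i, C (p i), \sum_(i < k) w i = 1 & x = \sum_(i < k) w i *: p i]].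

Definition relint (n : nat) (C : set 'cV[R]_n) : set 'cV[R]_n :=
  [set x | C x /\ exists2 e : R, 0 < e &
      forall z, aff C z -> enorm (z - x) < e -> C z].

Definition orth (n : nat) (V : set 'cV[R]_n) : set 'cV[R]_n :=
  [set v | forall u, V u -> ip u v = 0].

Definition primal_feas (m n : nat) (K : set 'cV[R]_n) (A : 'M[R]_(m, n))
  (b : 'cV[R]_m) : set 'cV[R]_n := [set x | A *m x = b /\ K x].

Definition primal_sol (m n : nat) (K : set 'cV[R]_n) (A : 'M[R]_(m, n))
  (b : 'cV[R]_m) (c : 'cV[R]_n) : set 'cV[R]_n :=
  [set x | primal_feas K A b x /\
           forall x', primal_feas K A b x' -> ip c x <= ip c x'].

Definition dual_feas (m n : nat) (K : set 'cV[R]_n) (A : 'M[R]_(m, n))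
  (c : 'cV[R]_n) : set 'cV[R]_m := [set y | dual_cone K (c - A^T *m y)].

Definition dual_sol (m n : nat) (K : set 'cV[R]_n) (A : 'M[R]_(m, n))
  (b : 'cV[R]_m) (c : 'cV[R]_n) : set 'cV[R]_m :=
  [set y | dual_feas K A c y /\
           forall y', dual_feas K A c y' -> ip b y' <= ip b y].

Definition strong_duality (m n : nat) (K : set 'cV[R]_n) (A : 'M[R]_(m, n))
  (b : 'cV[R]_m) (c : 'cV[R]_n) : Prop :=
  [/\ exists x, primal_sol K A b c x,
      exists y, dual_sol K A b c y,
      ecompact (primal_sol K A b c) &
      exists x y, [/\ primal_sol K A b c x, dual_sol K A b c y &
                      ip (c - A^T *m y) x = 0]].

Definition compl_face (n : nat) (K : set 'cV[R]_n) (s : 'cV[R]_n) : set 'cV[R]_n :=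
  [set x | K x /\ ip x s = 0].

Definition compl_space (n : nat) (K : set 'cV[R]_n) (s : 'cV[R]_n) : set 'cV[R]_n :=
  aff (compl_face K s).

Definition error_bound (m n : nat) (K : set 'cV[R]_n) (A : 'M[R]_(m, n))
  (b : 'cV[R]_m) (c : 'cV[R]_n) (s : 'cV[R]_n) (g g' : R) : Prop :=
  let X := primal_sol K A b c in
  let F := compl_face K s in
  let V := compl_space K s in
  forall x : 'cV[R]_n,
    let xp := proj K x in
    let xm := x - xp in
    dist x X <=
      (1 + g * sigma_max A) * enorm (proj (orth V) xp)
      + g * enorm (A *m x - b)
      + (1 + g * sigma_max A) * enorm (proj (orth V) xm)
      + g' * enorm (proj V xm)
      + g' * dist (proj V xp) F.

End Defs.

(* Let F be the complementary face, V = aff F (a subspace, since 0 is in F)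
   and S = F ∩ {x | A x = b}; by complementary slackness with y⋆, S consists
   of primal solutions.  Since x⋆ lies in the relative interior of F, F
   contains a ball of V around x⋆.  For g in F, take e in V with
   A e = A g - b and ‖e‖ <= κ ‖A g - b‖; the convex combination of g with the
   point of that ball opposite to e lies in S, within
   κ ‖A g - b‖ (1 + ‖g - x⋆‖ / r) of g.  Applied to the point of [x⋆, f] at
   a fixed distance beyond the diameter of the (bounded) solution set, this
   bounds ‖f - x⋆‖ linearly in ‖A f - b‖, which yields a Hoffman-type bound
   dist(f, S) <= C ‖A f - b‖ on F.  A general x is compared with a point of F
   close to P_V(x₊), paying ‖A f - b‖ <= ‖A x - b‖ + σ_max(A) ‖x - f‖.
   If the solution is unique, A is injective on V (a kernel direction would
   move x⋆ inside S), so ‖P_V x - x⋆‖ <= ‖A (P_V x - x⋆)‖ / σ_min(A_V). *)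

From HB Require Import structures.
From mathcomp Require Import all_boot all_order all_algebra.
From mathcomp Require Import boolp classical_sets reals.
From mathcomp Require Import lra ring.
Import Order.TTheory GRing.Theory Num.Theory.
Local Open Scope ring_scope.
Local Open Scope classical_set_scope.
Set Implicit Arguments. Unset Strict Implicit. Unset Printing Implicit Defensive.

Section EuclideanNorm.
Variable R : realType.
Implicit Types (k : nat).

Lemma ipE k (u v : 'cV[R]_k) : ip u v = (u^T *m v) 0 0.
Proof. by rewrite /ip !mxE; apply: eq_bigr => i _; rewrite mxE. Qed.

Lemma ipC k (u v : 'cV[R]_k) : ip u v = ip v u.
Proof. by apply: eq_bigr => i _; rewrite mulrC. Qed.

Lemma ipDl k (u v w : 'cV[R]_k) : ip (u + v) w = ip u w + ip v w.
Proof. by rewrite /ip -big_split; apply: eq_bigr => i _; rewrite mxE mulrDl. Qed.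

Lemma ipZl k a (u w : 'cV[R]_k) : ip (a *: u) w = a * ip u w.
Proof. by rewrite /ip mulr_sumr; apply: eq_bigr => i _; rewrite mxE mulrA. Qed.

Lemma ipNl k (u w : 'cV[R]_k) : ip (- u) w = - ip u w.
Proof. by rewrite -scaleN1r ipZl mulN1r. Qed.

Lemma ipBl k (u v w : 'cV[R]_k) : ip (u - v) w = ip u w - ip v w.
Proof. by rewrite ipDl ipNl. Qed.

Lemma ipDr k (u v w : 'cV[R]_k) : ip w (u + v) = ip w u + ip w v.
Proof. by rewrite ipC ipDl !(ipC w). Qed.

Lemma ipZr k a (u w : 'cV[R]_k) : ip w (a *: u) = a * ip w u.
Proof. by rewrite ipC ipZl ipC. Qed.

Lemma ipBr k (u v w : 'cV[R]_k) : ip w (u - v) = ip w u - ip w v.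
Proof. by rewrite !(ipC w) ipBl. Qed.

Lemma ip0l k (u : 'cV[R]_k) : ip 0 u = 0.
Proof. by rewrite -(scale0r 0) ipZl mul0r. Qed.

Lemma ip0r k (u : 'cV[R]_k) : ip u 0 = 0.
Proof. by rewrite ipC ip0l. Qed.

Lemma ipMl p k (Q : 'M[R]_(p, k)) u v : ip (Q *m u) v = ip u (Q^T *m v).
Proof. by rewrite !ipE trmx_mul !mulmxA. Qed.

Lemma ip_ge0 k (u : 'cV[R]_k) : 0 <= ip u u.
Proof. by rewrite /ip sumr_ge0 // => i _; rewrite -expr2 sqr_ge0. Qed.

Lemma ip_eq0 k (u : 'cV[R]_k) : ip u u = 0 -> u = 0.
Proof.
move=> /eqP; rewrite /ip psumr_eq0 => [/allP u0|i _]; last by rewrite -expr2 sqr_ge0.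
apply/matrixP => i j; rewrite (ord1 j) mxE.
by have := u0 i (mem_index_enum _); rewrite /= mulf_eq0 orbb => /eqP.
Qed.

Lemma Cauchy_Schwarz_sqr k (u v : 'cV[R]_k) : ip u v ^+ 2 <= ip u u * ip v v.
Proof.
have [v0|vn0] := eqVneq (ip v v) 0.
  by rewrite v0 mulr0 (ip_eq0 v0) ip0r expr0n.
have vp : 0 < ip v v by rewrite lt_neqAle eq_sym vn0 ip_ge0.
set t := ip u v / ip v v.
have := ip_ge0 (u - t *: v).
rewrite !ipBl !ipBr !ipZl !ipZr (ipC v u).
have -> : ip u u - t * ip u v - (t * ip u v - t * (t * ip v v))
    = ip u u - ip u v ^+ 2 / ip v v by rewrite /t; field.
by rewrite subr_ge0 ler_pdivrMr.
Qed.

Lemma enorm_ge0 k (u : 'cV[R]_k) : 0 <= enorm u.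
Proof. exact: sqrtr_ge0. Qed.

Lemma enorm_sq k (u : 'cV[R]_k) : enorm u ^+ 2 = ip u u.
Proof. by rewrite /enorm sqr_sqrtr // ip_ge0. Qed.

Lemma enorm0 k : enorm (0 : 'cV[R]_k) = 0.
Proof. by rewrite /enorm ip0l sqrtr0. Qed.

Lemma enorm_eq0 k (u : 'cV[R]_k) : enorm u = 0 -> u = 0.
Proof. by move=> u0; apply: ip_eq0; rewrite -enorm_sq u0 expr0n. Qed.

Lemma enorm_gt0 k (u : 'cV[R]_k) : u != 0 -> 0 < enorm u.
Proof.
move=> u0; rewrite lt_neqAle enorm_ge0 andbT eq_sym.
by apply: contra u0 => /eqP/enorm_eq0 ->.
Qed.

Lemma enorm_le_sqr k (u : 'cV[R]_k) (a : R) :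
  0 <= a -> ip u u <= a ^+ 2 -> enorm u <= a.
Proof. by move=> a0; rewrite -enorm_sq ler_sqr // nnegrE enorm_ge0. Qed.

Lemma Cauchy_Schwarz k (u v : 'cV[R]_k) : `|ip u v| <= enorm u * enorm v.
Proof.
rewrite -ler_sqr ?nnegrE ?mulr_ge0 ?enorm_ge0 //.
by rewrite exprMn !enorm_sq real_normK ?num_real // Cauchy_Schwarz_sqr.
Qed.

Lemma enormD k (u v : 'cV[R]_k) : enorm (u + v) <= enorm u + enorm v.
Proof.
apply: enorm_le_sqr; first by rewrite addr_ge0 ?enorm_ge0.
rewrite ipDl !ipDr (ipC v u) sqrrD !enorm_sq.
have := Cauchy_Schwarz u v; have := ler_norm (ip u v); lra.
Qed.

Lemma enormZ k a (u : 'cV[R]_k) : enorm (a *: u) = `|a| * enorm u.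
Proof.
by rewrite /enorm ipZl ipZr mulrA -expr2 sqrtrM ?sqr_ge0 // sqrtr_sqr.
Qed.

Lemma enormN k (u : 'cV[R]_k) : enorm (- u) = enorm u.
Proof. by rewrite -scaleN1r enormZ normrN normr1 mul1r. Qed.

Lemma enorm_sub_le k (u v w : 'cV[R]_k) : enorm (u - w) <= enorm (u - v) + enorm (v - w).
Proof. by have := enormD (u - v) (v - w); rewrite addrA subrK. Qed.

Lemma enorm_unit k (v : 'cV[R]_k) : v != 0 -> enorm ((enorm v)^-1 *: v) = 1.
Proof.
move=> v0; have vp := enorm_gt0 v0.
by rewrite enormZ ger0_norm ?invr_ge0 ?enorm_ge0 // mulVf // gt_eqF.
Qed.

Lemma enorm_add_orth k (u v : 'cV[R]_k) : ip u v = 0 ->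
  enorm (u + v) ^+ 2 = enorm u ^+ 2 + enorm v ^+ 2.
Proof. by move=> uv; rewrite !enorm_sq ipDl !ipDr (ipC v u) uv addr0 add0r. Qed.

Lemma enorm_mulmx_le p k (Q : 'M[R]_(p, k)) y :
  enorm (Q *m y) <= Num.sqrt (\sum_i ip (row i Q)^T (row i Q)^T) * enorm y.
Proof.
rewrite -ler_sqr ?nnegrE ?mulr_ge0 ?sqrtr_ge0 ?enorm_ge0 //.
rewrite exprMn !enorm_sq sqr_sqrtr; last by apply: sumr_ge0 => i _; exact: ip_ge0.
rewrite mulr_suml; apply: ler_sum => i _.
have -> : (Q *m y) i 0 = ip (row i Q)^T y.
  by rewrite mxE; apply: eq_bigr => j _; rewrite !mxE.
by rewrite -expr2 Cauchy_Schwarz_sqr.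
Qed.

End EuclideanNorm.

Section Extrema.
Variable R : realType.
Implicit Types (k : nat).

Lemma dist_le k (x : 'cV[R]_k) C z : C z -> dist x C <= enorm (x - z).
Proof.
move=> Cz; apply: ge_inf; last by exists z.
by exists 0 => _ [w _ <-]; exact: enorm_ge0.
Qed.

Lemma le_dist_bound k (y : 'cV[R]_k) C (a b c : R) : C !=set0 -> 0 <= c ->
  (forall f, C f -> a <= b + c * enorm (y - f)) -> a <= b + c * dist y C.
Proof.
move=> [f0 Cf0]; rewrite le_eqVlt => /predU1P [<- ab|c_gt0 ab].
  by have := ab f0 Cf0; rewrite !mul0r.
rewrite -lerBlDl -ler_pdivrMl //; apply: lb_le_inf; first by exists (enorm (y - f0)), f0.
by move=> _ [f Cf <-]; rewrite ler_pdivrMl // lerBlDl ab.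
Qed.

Lemma enorm_mulmx_le_sigma_max p k (A : 'M[R]_(p, k)) v :
  enorm (A *m v) <= sigma_max A * enorm v.
Proof.
have [->|v0] := eqVneq v 0; first by rewrite mulmx0 !enorm0 mulr0.
have vp := enorm_gt0 v0.
have : enorm (A *m ((enorm v)^-1 *: v)) <= sigma_max A.
  apply: ub_le_sup; last by exists ((enorm v)^-1 *: v) => //; exact: enorm_unit.
  exists (Num.sqrt (\sum_i ip (row i A)^T (row i A)^T)) => _ [w /= w1 <-].
  by rewrite -[leRHS]mulr1 -w1 enorm_mulmx_le.
rewrite -scalemxAr enormZ ger0_norm ?invr_ge0 ?enorm_ge0 // mulrC.
by rewrite -ler_pdivlMr ?invr_gt0 // invrK.
Qed.

Lemma sigma_max_ge0 p k (A : 'M[R]_(p, k)) : 0 <= sigma_max A.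
Proof.
have [[x x1]|nx] := pselect (exists x : 'cV[R]_k, enorm x = 1).
  apply: le_trans (enorm_ge0 (A *m x)) _.
  by have := enorm_mulmx_le_sigma_max A x; rewrite x1 mulr1.
rewrite /sigma_max (_ : [set _ | _ in _] = set0) ?sup0 //.
by apply/seteqP; split => // _ [w /= w1 _]; apply: nx; exists w.
Qed.

Lemma sigma_min_on_ge0 p k (A : 'M[R]_(p, k)) V : 0 <= sigma_min_on A V.
Proof.
have [[x Vx]|nx] := pselect (exists x : 'cV[R]_k, V x /\ enorm x = 1).
  apply: lb_le_inf; first by exists (enorm (A *m x)), x.
  by move=> _ [w _ <-]; exact: enorm_ge0.
rewrite /sigma_min_on (_ : [set _ | _ in _] = set0) ?inf0 //.
by apply/seteqP; split => // _ [w /= Vw _]; apply: nx; exists w.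
Qed.

Lemma enorm_le_sigma_min_on p k (A : 'M[R]_(p, k)) V (kap : R) :
  (forall a v, V v -> V (a *: v)) -> 0 < kap ->
  (forall v, V v -> enorm v <= kap * enorm (A *m v)) ->
  forall v, V v -> enorm v <= (sigma_min_on A V)^-1 * enorm (A *m v).
Proof.
move=> VZ kap_gt0 kapA v Vv.
have [->|v0] := eqVneq v 0.
  by rewrite enorm0 mulr_ge0 ?invr_ge0 ?sigma_min_on_ge0 ?enorm_ge0.
set u := (enorm v)^-1 *: v.
have vp := enorm_gt0 v0.
have Su : [set enorm (A *m x) | x in [set x | V x /\ enorm x = 1]] (enorm (A *m u)).
  by exists u => //; split; [exact: VZ | exact: enorm_unit].
have sm_gt0 : 0 < sigma_min_on A V.
  apply: lt_le_trans (_ : kap^-1 <= _); first by rewrite invr_gt0.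
  apply: lb_le_inf; first by exists (enorm (A *m u)).
  by move=> _ [w [Vw w1] <-]; rewrite -[kap^-1]mulr1 ler_pdivrMl // -w1 kapA.
have : sigma_min_on A V <= enorm (A *m u).
  by apply: (ge_inf _ Su); exists 0 => _ [w _ <-]; exact: enorm_ge0.
rewrite -scalemxAr enormZ ger0_norm ?invr_ge0 ?enorm_ge0 // mulrC.
rewrite ler_pdivlMr // => smv.
by rewrite -(ler_pM2l sm_gt0) mulrA mulfV ?gt_eqF // mul1r.
Qed.

Lemma enorm_sub_le_residual p k (A : 'M[R]_(p, k)) b x y z (g : R) :
  0 <= g -> enorm (y - z) <= g * enorm (A *m y - b) ->
  enorm (x - z) <= (1 + g * sigma_max A) * enorm (x - y) + g * enorm (A *m x - b).
Proof.
move=> g0 yz; apply: le_trans (enorm_sub_le x y z) _.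
have Ay : enorm (A *m y - b) <= enorm (A *m x - b) + sigma_max A * enorm (x - y).
  apply: le_trans (enorm_sub_le _ (A *m x) _) _; rewrite [leLHS]addrC lerD2l.
  by rewrite -enormN opprB -mulmxBr enorm_mulmx_le_sigma_max.
have := ler_wpM2l g0 Ay; lra.
Qed.

End Extrema.

Lemma proj_eq_of_orth (R : realType) n (V : set 'cV[R]_n) x p :
  V p -> (forall z, V z -> V (p - z)) -> (forall z, V z -> ip z (x - p) = 0) ->
  proj V x = p.
Proof.
move=> Vp Vsub orthp.
have pyth z : V z -> enorm (x - z) ^+ 2 = enorm (x - p) ^+ 2 + enorm (p - z) ^+ 2.
  move=> Vz; rewrite -enorm_add_orth ?addrA ?subrK // ipC orthp //; exact: Vsub.
apply: xget_unique.
  split => // w Vw; rewrite -ler_sqr ?nnegrE ?enorm_ge0 // (pyth w) // lerDl.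
  exact: sqr_ge0.
move=> q [Vq qmin]; apply/eqP; rewrite eq_sym -subr_eq0; apply/eqP/enorm_eq0.
have := qmin p Vp; rewrite -ler_sqr ?nnegrE ?enorm_ge0 // (pyth q Vq) gerDl => pq.
by apply/eqP; rewrite -sqrf_eq0 eq_le pq sqr_ge0.
Qed.

Section RowSpace.
Variables (R : realType) (n : nat).

Definition rowspace k (M : 'M[R]_(k, n)) : set 'cV[R]_n := [set x | (x^T <= M)%MS].

Lemma rowspaceB k (M : 'M[R]_(k, n)) x y :
  rowspace M x -> rowspace M y -> rowspace M (x - y).
Proof. by rewrite /rowspace /= linearB /= => Mx My; rewrite addmx_sub ?eqmx_opp. Qed.

Lemma rowspaceD k (M : 'M[R]_(k, n)) x y :
  rowspace M x -> rowspace M y -> rowspace M (x + y).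
Proof. by rewrite /rowspace /= linearD /= => Mx My; rewrite addmx_sub. Qed.

Lemma rowspaceZ k (M : 'M[R]_(k, n)) a x : rowspace M x -> rowspace M (a *: x).
Proof. by rewrite /rowspace /= linearZ /= => Mx; rewrite scalemx_sub. Qed.

Lemma rowspace_trmx_mul k (M : 'M[R]_(k, n)) (c : 'cV[R]_k) : rowspace M (M^T *m c).
Proof. by rewrite /rowspace /= trmx_mul trmxK submxMl. Qed.

Lemma span_basis (F : set 'cV[R]_n) :
  exists k (M : 'M[R]_(k, n)),
    [/\ row_free M, (forall i, F (row i M)^T) & (forall x, F x -> rowspace M x)].
Proof.
pose P k := exists M : 'M[R]_(k, n), row_free M /\ forall i, F (row i M)^T.
have P0 : exists k, `[< P k >].
  by exists 0%N; apply/asboolP; exists 0; split; [rewrite /row_free mxrank0 | case].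
have P_le_n k : `[< P k >] -> (k <= n)%N.
  by move=> /asboolP [M [/eqP e _]]; rewrite -e; exact: rank_leq_col.
have [k /asboolP [M [freeM FM]] kmax] := ex_maxnP P0 P_le_n.
exists k, M; split => // x Fx; apply: contrapT => xM.
suff /kmax : `[< P (k + 1)%N >] by rewrite addn1 ltnn.
apply/asboolP; exists (col_mx M x^T); split.
  rewrite /row_free -addsmxE eqn_leq; apply/andP; split.
    apply: leq_trans (mxrank_adds_leqif M x^T) _.
    by rewrite (eqP freeM) leq_add2l rank_leq_row.
  have := ltn_leqif (mxrank_leqif_sup (addsmxSl M x^T)).
  by rewrite (eqP freeM) addsmx_sub submx_refl addn1 => ->; exact/negP.
move=> i; case: (split_ordP i) => j ->; first by rewrite rowKu.
by rewrite rowKd (ord1 j) (_ : row 0 x^T = x^T) ?trmxK //; apply/rowP => a; rewrite !mxE.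
Qed.

Lemma aff_rowspace (F : set 'cV[R]_n) k (M : 'M[R]_(k, n)) :
  F 0 -> (forall i, F (row i M)^T) -> (forall x, F x -> rowspace M x) ->
  aff F = rowspace M.
Proof.
move=> F0 FM MF; apply/funext => x; apply/propext; split.
  move=> [j [p [w [Fp _ ->]]]]; rewrite /rowspace /= linear_sum /=.
  by apply: summx_sub => i _; rewrite linearZ /= scalemx_sub // MF.
move=> /submxP [D eD].
pose lift_max (j : 'I_k) : 'I_k.+1 := lift ord_max j.
have lift_maxE j : widen_ord (leqnSn k) j = lift_max j.
  by apply: val_inj; rewrite /= /bump leqNgt ltn_ord.
pose p i := if unlift ord_max i is Some j then (row j M)^T else 0.
pose w i := if unlift ord_max i is Some j then D 0 j else 1 - \sum_(j < k) D 0 j.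
exists k.+1, p, w; split.
- by move=> i; rewrite /p; case: (unlift _ i).
- rewrite big_ord_recr /= /w unlift_none.
  by rewrite (eq_bigr (fun j => D 0 j)) ?subrKC // => j _; rewrite lift_maxE liftK.
- rewrite big_ord_recr /= /p unlift_none scaler0 addr0 -[x]trmxK eD mulmx_sum_row.
  rewrite linear_sum; apply: eq_bigr => j _.
  by rewrite lift_maxE /w /p liftK linearZ.
Qed.

Section OrthProjection.
Variables (k : nat) (M : 'M[R]_(k, n)).
Hypothesis freeM : row_free M.

Definition orth_projmx := M^T *m invmx (M *m M^T) *m M.

Lemma rowspace_orth_projmx (x : 'cV[R]_n) : rowspace M (orth_projmx *m x).
Proof. by rewrite /orth_projmx -!mulmxA; exact: rowspace_trmx_mul. Qed.

Lemma gram_unitmx : M *m M^T \in unitmx.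
Proof.
rewrite -row_free_unit; apply: inj_row_free => v vMM.
have : ip (v *m M)^T (v *m M)^T = 0.
  by rewrite ipE trmxK trmx_mul !mulmxA -(mulmxA v) vMM !mul0mx mxE.
move/ip_eq0/(congr1 trmx); rewrite trmxK trmx0 => /eqP.
by rewrite mulmx_free_eq0 // => /eqP.
Qed.

Lemma mulmx_sub_orth_projmx (x : 'cV[R]_n) : M *m (x - orth_projmx *m x) = 0.
Proof. by rewrite mulmxBr /orth_projmx !mulmxA mulmxV ?gram_unitmx // mul1mx subrr. Qed.

Lemma ip_rowspace_ker (z y : 'cV[R]_n) : rowspace M z -> M *m y = 0 -> ip z y = 0.
Proof. by move=> /submxP [D eD] My; rewrite ipE eD -mulmxA My mulmx0 mxE. Qed.

Lemma proj_rowspace : proj (rowspace M) = mulmx orth_projmx.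
Proof.
apply/funext => x; apply: proj_eq_of_orth; first exact: rowspace_orth_projmx.
  by move=> z Mz; apply: rowspaceB => //; exact: rowspace_orth_projmx.
by move=> z Mz; apply: ip_rowspace_ker => //; exact: mulmx_sub_orth_projmx.
Qed.

Lemma proj_orth_rowspace : proj (orth (rowspace M)) = fun x => x - orth_projmx *m x.
Proof.
apply/funext => x; apply: proj_eq_of_orth.
- by move=> u Mu; apply: ip_rowspace_ker => //; exact: mulmx_sub_orth_projmx.
- move=> z z_orth u Mu.
  by rewrite ipBr z_orth // (ip_rowspace_ker Mu (mulmx_sub_orth_projmx x)) subrr.
- by move=> z z_orth; rewrite opprB addrC subrK ipC z_orth //; exact: rowspace_orth_projmx.
Qed.

End OrthProjection.

Lemma rowspace_right_inverse m k (M : 'M[R]_(k, n)) (A : 'M[R]_(m, n)) :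
  exists2 kap : R, 0 < kap & forall v, rowspace M v ->
    exists2 e, rowspace M e /\ A *m e = A *m v & enorm e <= kap * enorm (A *m v).
Proof.
pose Q := M^T *m (pinvmx (A *m M^T)^T)^T.
exists (Num.sqrt (\sum_i ip (row i Q)^T (row i Q)^T) + 1); first by rewrite ltr_wpDl ?sqrtr_ge0.
move=> v /submxP [D eD]; exists (Q *m (A *m v)); last first.
  apply: le_trans (enorm_mulmx_le _ _) _.
  by rewrite ler_wpM2r ?enorm_ge0 // lerDl.
split; first by rewrite /Q -mulmxA; exact: rowspace_trmx_mul.
have AM : ((A *m v)^T <= (A *m M^T)^T)%MS.
  by rewrite trmx_mul eD trmx_mul trmxK -mulmxA submxMl.
have := mulmxKpV AM; rewrite /Q => /(congr1 trmx).
by rewrite !trmx_mul !trmxK !mulmxA => ->.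
Qed.

End RowSpace.

Lemma enorm_sub_mulmx_le (R : realType) n (P : 'M[R]_n) (x xp : 'cV[R]_n) :
  enorm (x - P *m xp) <=
    enorm (xp - P *m xp) + enorm ((x - xp) - P *m (x - xp)) + enorm (P *m (x - xp)).
Proof.
have -> : x - P *m xp = (xp - P *m xp) + ((x - xp) - P *m (x - xp)) + P *m (x - xp).
  by rewrite mulmxBr; apply/matrixP => i j; rewrite !mxE; ring.
by apply: le_trans (enormD _ _) _; rewrite lerD2r enormD.
Qed.

Lemma enorm_sub_mulmx_le_orth (R : realType) n (P : 'M[R]_n) (x xp : 'cV[R]_n) :
  enorm (x - P *m x) <= enorm (xp - P *m xp) + enorm ((x - xp) - P *m (x - xp)).
Proof.
have -> : x - P *m x = (xp - P *m xp) + ((x - xp) - P *m (x - xp)).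
  by rewrite mulmxBr; apply/matrixP => i j; rewrite !mxE; ring.
exact: enormD.
Qed.

Section ComplementaryFace.
Variables (R : realType) (n : nat) (K : set 'cV[R]_n).

Lemma compl_face0 s : K 0 -> compl_face K s 0.
Proof. by split; rewrite ?ip0l. Qed.

Lemma compl_face_convex s :
  (forall x y, K x -> K y -> K (x + y)) -> (forall (t : R) x, 0 <= t -> K x -> K (t *: x)) ->
  forall x y (t : R), compl_face K s x -> compl_face K s y -> 0 <= t <= 1 ->
    compl_face K s ((1 - t) *: x + t *: y).
Proof.
move=> KD KZ x y t [Kx sx] [Ky sy] /andP [t0 t1]; split.
  by apply: KD; apply: KZ => //; rewrite subr_ge0.
by rewrite ipDl !ipZl sx sy !mulr0 addr0.
Qed.

Lemma primal_sol_of_compl_face m (A : 'M[R]_(m, n)) b c y p :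
  dual_feas K A c y -> compl_face K (c - A^T *m y) p -> A *m p = b -> primal_sol K A b c p.
Proof.
move=> dual_y [Kp sp] Ap; split=> // x [Ax Kx].
have cE z : ip c z = ip (c - A^T *m y) z + ip y (A *m z).
  by rewrite ipBl ipMl trmxK subrK.
by rewrite !cE Ap Ax ipC sp add0r lerDr; exact: dual_y.
Qed.

End ComplementaryFace.

Section FaceErrorBound.
Variables (R : realType) (m n k : nat) (A : 'M[R]_(m, n)) (b : 'cV[R]_m).
Variables (M : 'M[R]_(k, n)) (F : set 'cV[R]_n) (xs : 'cV[R]_n) (r kap Mb : R).
Hypothesis F_convex : forall x y (t : R), F x -> F y -> 0 <= t <= 1 ->
  F ((1 - t) *: x + t *: y).
Hypothesis F_rowspace : forall x, F x -> rowspace M x.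
Hypothesis F_xs : F xs.
Hypothesis A_xs : A *m xs = b.
Hypothesis r_gt0 : 0 < r.
Hypothesis F_ball : forall z, rowspace M z -> enorm (z - xs) <= r -> F z.
Hypothesis kap_gt0 : 0 < kap.
Hypothesis A_right_inverse : forall v, rowspace M v ->
  exists2 e, rowspace M e /\ A *m e = A *m v & enorm e <= kap * enorm (A *m v).

Let S := [set p | F p /\ A *m p = b].
Hypothesis S_bounded : forall p, S p -> enorm p <= Mb.

Lemma face_sol_near g : F g ->
  exists2 p, S p & enorm (g - p) <= kap * enorm (A *m g - b) * (1 + enorm (g - xs) / r).
Proof.
move=> Fg.
have [e [Me Ae] e_le] : exists2 e, rowspace M e /\ A *m e = A *m g - b &
    enorm e <= kap * enorm (A *m g - b).
  by rewrite -A_xs -mulmxBr; apply: A_right_inverse; apply: rowspaceB; exact: F_rowspace.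
have bound_ge0 : 0 <= 1 + enorm (g - xs) / r by rewrite addr_ge0 ?divr_ge0 ?enorm_ge0 ?ltW.
have [e0|e_neq0] := eqVneq e 0.
  exists g; last by rewrite subrr enorm0 !mulr_ge0 ?enorm_ge0 // ltW.
  by split=> //; apply/eqP; rewrite -subr_eq0 -Ae e0 mulmx0.
set ne := enorm e; have ne_gt0 : 0 < ne := enorm_gt0 e_neq0.
set q := xs - (r / ne) *: e.
have Fq : F q.
  apply: F_ball; first by apply: rowspaceB; [exact: F_rowspace | exact: rowspaceZ].
  rewrite /q addrAC subrr add0r enormN enormZ ger0_norm; last by rewrite divr_ge0 ?ltW.
  by rewrite mulfVK ?gt_eqF.
(* the weight [lam] makes the residuals [A g - b] and [A q - b] cancel *)
set lam := ne / (r + ne).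
have lam_ge0 : 0 <= lam by rewrite divr_ge0 // ltW // addr_gt0.
have lam_le1 : lam <= 1 by rewrite ler_pdivrMr ?addr_gt0 // mul1r lerDr ltW.
exists ((1 - lam) *: g + lam *: q).
  split; first by apply: F_convex; rewrite ?lam_ge0.
  rewrite mulmxDr -!scalemxAr /q mulmxBr -scalemxAr Ae A_xs.
  by apply/matrixP => i j; rewrite !mxE /lam; field; rewrite !gt_eqF ?addr_gt0.
have -> : g - ((1 - lam) *: g + lam *: q) = lam *: (g - xs) + (1 - lam) *: e.
  by apply/matrixP => i j; rewrite /q !mxE /lam; field; rewrite !gt_eqF ?addr_gt0.
apply: le_trans (enormD _ _) _; rewrite !enormZ !ger0_norm ?subr_ge0 // -/ne.
apply: le_trans (ler_wpM2r bound_ge0 e_le); rewrite mulrDr mulr1 [leRHS]addrC.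
apply: lerD; last by rewrite ler_piMl ?enorm_ge0 // lerBlDr lerDl.
rewrite [leRHS]mulrA [leRHS]mulrAC ler_wpM2r ?enorm_ge0 //.
by rewrite /lam ler_pM2l // lef_pV2 ?posrE ?addr_gt0 // lerDl ltW.
Qed.

Let T := 2 * Mb + 1.
Let H := kap * T * (1 + T / r).

Lemma T_gt0 : 0 < T.
Proof. by have := S_bounded (conj F_xs A_xs); have := enorm_ge0 xs; rewrite /T; lra. Qed.

Lemma H_ge0 : 0 <= H.
Proof.
have T0 := ltW T_gt0.
have TR0 : 0 <= 1 + T / r by rewrite addr_ge0 // divr_ge0 // ltW.
by rewrite /H !mulr_ge0 // ltW.
Qed.

Lemma face_enorm_sub_xs_le f : F f -> enorm (f - xs) <= T + H * enorm (A *m f - b).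
Proof.
move=> Ff; have T0 := T_gt0; have H0 := H_ge0.
have [fT|Tf] := lerP (enorm (f - xs)) T.
  by apply: le_trans fT _; rewrite lerDl mulr_ge0 ?enorm_ge0.
set D := enorm (f - xs) in Tf *; have D_gt0 : 0 < D := lt_trans T0 Tf.
set eps := enorm (A *m f - b).
set t := T / D.
have t_ge0 : 0 <= t by rewrite divr_ge0 ?ltW.
have t01 : 0 <= t <= 1 by rewrite t_ge0 ler_pdivrMr // mul1r ltW.
(* [g] lies at distance [T] = 2 Mb + 1 from [xs], hence at distance >= 1 from S *)
set g := (1 - t) *: xs + t *: f.
have g_xs : enorm (g - xs) = T.
  have -> : g - xs = t *: (f - xs) by apply/matrixP => i j; rewrite !mxE; ring.
  by rewrite enormZ ger0_norm // mulfVK ?gt_eqF.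
have Ag : A *m g - b = t *: (A *m f - b).
  by rewrite mulmxDr -!scalemxAr A_xs; apply/matrixP => i j; rewrite !mxE; ring.
have [p Sp gp] := face_sol_near (F_convex F_xs Ff t01).
rewrite -/g Ag g_xs enormZ ger0_norm // in gp.
have gp_ge1 : 1 <= enorm (g - p).
  have := enorm_sub_le g p xs; have := enorm_sub_le p 0 xs.
  rewrite subr0 sub0r enormN g_xs.
  by have := S_bounded Sp; have := S_bounded (conj F_xs A_xs); rewrite /T; lra.
have : 1 <= H * eps / D.
  have <- : kap * (t * eps) * (1 + T / r) = H * eps / D.
    by rewrite /t /H; field; rewrite !gt_eqF.
  exact: le_trans gp_ge1 gp.
rewrite ler_pdivlMr // mul1r => DH.
by apply: le_trans DH _; rewrite lerDr ltW.
Qed.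

Lemma face_error_bound : exists2 C, 0 <= C &
  forall f, F f -> exists2 p, S p & enorm (f - p) <= C * enorm (A *m f - b).
Proof.
have T0 := ltW T_gt0; have H0 := H_ge0.
have TH_ge0 : 0 <= T + H := addr_ge0 T0 H0.
have kTH_ge0 : 0 <= kap * (1 + (T + H) / r).
  exact: mulr_ge0 (ltW kap_gt0) (addr_ge0 ler01 (divr_ge0 TH_ge0 (ltW r_gt0))).
exists (kap * (1 + (T + H) / r) + T + H); first by rewrite -addrA addr_ge0.
move=> f Ff; set eps := enorm (A *m f - b); have eps_ge0 : 0 <= eps := enorm_ge0 _.
have f_xs := face_enorm_sub_xs_le Ff; rewrite -/eps in f_xs.
have [eps_le1|eps_gt1] := lerP eps 1.
  have [p Sp fp] := face_sol_near Ff; exists p => //.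
  apply: le_trans fp _; rewrite -/eps [leLHS]mulrAC ler_wpM2r //.
  apply: (@le_trans _ _ (kap * (1 + (T + H) / r))); last lra.
  rewrite ler_wpM2l ?(ltW kap_gt0) // lerD2l ler_pM2r ?invr_gt0 //.
  by apply: le_trans f_xs _; rewrite lerD2l ler_piMr.
exists xs; first by split.
have TT : T <= T * eps by rewrite ler_peMr // ltW.
have := mulr_ge0 kTH_ge0 eps_ge0.
have -> : (kap * (1 + (T + H) / r) + T + H) * eps
    = kap * (1 + (T + H) / r) * eps + T * eps + H * eps by ring.
lra.
Qed.

Variable X : set 'cV[R]_n.
Hypothesis S_sub_X : forall p, S p -> X p.

Lemma error_bound_face : exists2 g : R, 0 <= g & forall (P : 'M[R]_n) x xp,
  dist x X <= (1 + g * sigma_max A) * enorm (xp - P *m xp)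
    + g * enorm (A *m x - b)
    + (1 + g * sigma_max A) * enorm ((x - xp) - P *m (x - xp))
    + (1 + g * sigma_max A) * enorm (P *m (x - xp))
    + (1 + g * sigma_max A) * dist (P *m xp) F.
Proof.
have [C C_ge0 C_bound] := face_error_bound.
exists C => // P x xp.
have g_ge0 : 0 <= 1 + C * sigma_max A by rewrite addr_ge0 ?mulr_ge0 ?sigma_max_ge0.
apply: le_dist_bound => [|//|f Ff]; first by exists xs.
have [p Sp fp] := C_bound f Ff.
apply: le_trans (dist_le x (S_sub_X Sp)) _.
apply: le_trans (enorm_sub_le_residual x C_ge0 fp) _.
have x_f := le_trans (enorm_sub_le x (P *m xp) f) (lerD (enorm_sub_mulmx_le P x xp) (lexx _)).
have := ler_wpM2l g_ge0 x_f.
move: (1 + C * sigma_max A) => g; rewrite !mulrDr; lra.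
Qed.

Lemma rowspace_enorm_le_of_unique : (forall p, S p -> p = xs) ->
  forall v, rowspace M v -> enorm v <= kap * enorm (A *m v).
Proof.
move=> S_xs.
have A_inj v : rowspace M v -> A *m v = 0 -> v = 0.
  move=> Mv Av; apply/eqP; apply: contraT => v_neq0; have v_gt0 := enorm_gt0 v_neq0.
  have Sq : S (xs + (r / enorm v) *: v).
    split; last by rewrite mulmxDr -scalemxAr Av scaler0 addr0.
    apply: F_ball; first by apply: rowspaceD; [exact: F_rowspace | exact: rowspaceZ].
    rewrite addrAC subrr add0r enormZ ger0_norm; last by rewrite divr_ge0 ?ltW.
    by rewrite mulfVK ?gt_eqF.
  have /eqP := S_xs _ Sq; rewrite -subr_eq0 (addrC xs) addrK.
  by rewrite scaler_eq0 (negbTE v_neq0) orbF mulf_eq0 invr_eq0 !gt_eqF.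
move=> v Mv; have [e [Me Ae] e_le] := A_right_inverse Mv.
suff -> : v = e by rewrite -Ae in e_le.
apply/eqP; rewrite -subr_eq0; apply/eqP/A_inj; first exact: rowspaceB.
by rewrite mulmxBr Ae subrr.
Qed.

Lemma error_bound_unique : (forall p, S p -> p = xs) -> forall x xp,
  dist x X <=
    (1 + (sigma_min_on A (rowspace M))^-1 * sigma_max A) * enorm (xp - orth_projmx M *m xp)
    + (sigma_min_on A (rowspace M))^-1 * enorm (A *m x - b)
    + (1 + (sigma_min_on A (rowspace M))^-1 * sigma_max A)
      * enorm ((x - xp) - orth_projmx M *m (x - xp)).
Proof.
move=> S_xs x xp; set g := (sigma_min_on A (rowspace M))^-1; set P := orth_projmx M.
have g_ge0 : 0 <= g by rewrite invr_ge0 sigma_min_on_ge0.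
have Px_xs : enorm (P *m x - xs) <= g * enorm (A *m (P *m x) - b).
  rewrite -A_xs -mulmxBr; apply: (enorm_le_sigma_min_on _ kap_gt0).
  - by move=> a v; exact: rowspaceZ.
  - exact: rowspace_enorm_le_of_unique.
  - by apply: rowspaceB; [exact: rowspace_orth_projmx | exact: F_rowspace].
apply: le_trans (dist_le x (S_sub_X (conj F_xs A_xs))) _.
apply: le_trans (enorm_sub_le_residual x g_ge0 Px_xs) _.
have g1_ge0 : 0 <= 1 + g * sigma_max A by rewrite addr_ge0 ?mulr_ge0 ?sigma_max_ge0.
have := ler_wpM2l g1_ge0 (enorm_sub_mulmx_le_orth P x xp).
move: (1 + g * sigma_max A) => g1; rewrite mulrDr; lra.
Qed.

End FaceErrorBound.

Unset Implicit Arguments.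
Set Strict Implicit.

Theorem theorem1 (R : realType) (m n : nat) (K : set 'cV[R]_n)
  (A : 'M[R]_(m, n)) (b : 'cV[R]_m) (c : 'cV[R]_n)
  (xs : 'cV[R]_n) (ys : 'cV[R]_m) :
  proper_cone K ->
  strong_duality K A b c ->
  primal_sol K A b c xs ->
  dual_sol K A b c ys ->
  relint (compl_face K (c - A^T *m ys)) xs ->
  (exists g g' : R, [/\ 0 <= g, 0 <= g' &
     error_bound K A b c (c - A^T *m ys) g g'])
  /\
  ((exists x0, primal_sol K A b c = [set x0]) ->
     error_bound K A b c (c - A^T *m ys)
       (sigma_min_on A (compl_space K (c - A^T *m ys)))^-1 0).
Proof.
move=> [[K0 K_add K_scale _] _] [_ _ [_ [Mb X_bounded]] _] X_xs [dual_ys _]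
  [F_xs [e e_gt0 F_rel]].
have A_xs : A *m xs = b by case: X_xs => [[]].
set s := c - A^T *m ys.
have [k [M [freeM F_rows F_M]]] := span_basis (compl_face K s).
have V_M : compl_space K s = rowspace M := aff_rowspace (compl_face0 s K0) F_rows F_M.
have F_ball z : rowspace M z -> enorm (z - xs) <= e / 2 -> compl_face K s z.
  rewrite -V_M => Vz z_xs; apply: F_rel => //; apply: le_lt_trans z_xs _.
  by rewrite ltr_pdivrMr // mulr_natr mulr2n ltrDl.
have e2_gt0 : 0 < e / 2 by rewrite divr_gt0.
have [kap kap_gt0 A_rinv] := rowspace_right_inverse M A.
have S_X p : compl_face K s p /\ A *m p = b -> primal_sol K A b c p.
  by move=> [Fp Ap]; exact: primal_sol_of_compl_face dual_ys Fp Ap.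
have F_convex := @compl_face_convex _ _ K s K_add K_scale.
rewrite /error_bound V_M (proj_rowspace freeM) (proj_orth_rowspace freeM); split.
  have S_bounded p : compl_face K s p /\ A *m p = b -> enorm p <= Mb.
    by move/S_X; exact: X_bounded.
  have [g g_ge0 g_bound] :=
    error_bound_face F_convex F_M F_xs A_xs e2_gt0 F_ball kap_gt0 A_rinv S_bounded S_X.
  exists g, (1 + g * sigma_max A); split=> [//||x].
  - by rewrite addr_ge0 ?mulr_ge0 ?sigma_max_ge0.
  - exact: g_bound.
move=> [x0 X_x0] x /=; rewrite !mul0r !addr0.
apply: (error_bound_unique F_M F_xs A_xs e2_gt0 F_ball kap_gt0 A_rinv S_X) => p /S_X.
by move: X_xs; rewrite X_x0 => -> ->.
Qed.
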